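(* Let $S\subseteq\{0,1\}^n$ and $f:S\to\{0,1\}$. Then for any $\epsilon<1/2$, $$\mathsf{L}^{\epsilon}(f)\ \ge\ \big((1-2\epsilon)\,\mathsf{sumPI}(f)\big)^2.$$
   Context: For $g:S\to\{0,1\}$ with $S\subseteq\{0,1\}^n$, $\mathsf{L}(g)$ denotes the minimum number of leaves of a formula over $\{\wedge,\vee\}$ with literals $x_i,\neg x_i$ at the leaves that agrees with $g$ on $S$. A function $f:S\to\{0,1\}$ is $\epsilon$-approximated by a set of functions $\{f_j\}_{j\in J}$, $f_j:S\to\{0,1\}$, if there is a probability distribution $\alpha$ on $J$ such that for every $x\in S$, $\Pr_{j\sim\alpha}[f(x)=f_j(x)]\ge 1-\epsilon$. $\mathsf{L}^\epsilon(f)$ is the least $s$ such that $f$ is $\epsilon$-approximated by a set of functions $\{f_j\}$ with $\max_j \mathsf{L}(f_j)\le s$. With $p=\{p_x:x\in S\}$ ranging over families of probability distributions on $[n]$, $$\mathsf{sumPI}(f)=\min_{p}\ \max_{x,y\in S:\ f(x)\neq f(y)} \frac{1}{\sum_{i:\,x_i\neq y_i}\sqrt{p_x(i)p_y(i)}}.$$ *)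

From HB Require Import structures.
From mathcomp Require Import all_boot all_order all_algebra.
From mathcomp Require Import boolp classical_sets reals.
Set Implicit Arguments. Unset Strict Implicit. Unset Printing Implicit Defensive.
Import Order.TTheory GRing.Theory Num.Theory.
Local Open Scope ring_scope.

Definition bv (n : nat) := {ffun 'I_n -> bool}.

(* De Morgan formulas over {AND, OR} with literals x_i (Lit i true) and
   ~x_i (Lit i false) at the leaves. *)
Inductive formula (n : nat) : Type :=
| Lit of 'I_n & bool
| And of formula n & formula n
| Or of formula n & formula n.

Fixpoint feval n (F : formula n) (x : bv n) : bool :=
  match F with
  | Lit i b => if b then x i else ~~ x i
  | And F1 F2 => feval F1 x && feval F2 x
  | Or F1 F2 => feval F1 x || feval F2 x
  end.

Fixpoint leaves n (F : formula n) : nat :=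
  match F with
  | Lit _ _ => 1
  | And F1 F2 => leaves F1 + leaves F2
  | Or F1 F2 => leaves F1 + leaves F2
  end.

(* A function S -> {0,1} is represented by g : bv n -> bool; only its values
   on S are ever used. *)
Definition agrees_on n (S : {set bv n}) (F : formula n) (g : bv n -> bool) :=
  forall x, x \in S -> feval F x = g x.

(* isL S g k  <->  L(g) = k : the minimum number of leaves of a formula
   agreeing with g on S is k. *)
Definition isL n (S : {set bv n}) (g : bv n -> bool) (k : nat) : Prop :=
  (exists F : formula n, agrees_on S F g /\ leaves F = k) /\
  (forall F : formula n, agrees_on S F g -> (k <= leaves F)%N).

Definition eps_approx {R : realType} n (S : {set bv n}) (f : bv n -> bool)
  (eps : R) (J : finType) (fam : J -> bv n -> bool) : Prop :=
  exists alpha : J -> R,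
    (forall j, 0 <= alpha j) /\ \sum_(j : J) alpha j = 1 /\
    (forall x, x \in S -> 1 - eps <= \sum_(j : J | f x == fam j x) alpha j).

Definition approx_by_size {R : realType} n (S : {set bv n}) (f : bv n -> bool)
  (eps : R) (s : nat) : Prop :=
  exists (J : finType) (fam : J -> bv n -> bool),
    eps_approx S f eps fam /\
    (forall j, exists t, isL S (fam j) t /\ (t <= s)%N).

(* isLeps S f eps s  <->  L^eps(f) = s (the least such s). *)
Definition isLeps {R : realType} n (S : {set bv n}) (f : bv n -> bool)
  (eps : R) (s : nat) : Prop :=
  approx_by_size S f eps s /\
  (forall s', approx_by_size S f eps s' -> (s <= s')%N).

Definition distr_family {R : realType} n (S : {set bv n}) (p : bv n -> 'I_n -> R) :=
  forall x, x \in S -> (forall i, 0 <= p x i) /\ \sum_(i < n) p x i = 1.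

Definition overlap (R : realType) n (p : bv n -> 'I_n -> R) (x y : bv n) : R :=
  \sum_(i < n | x i != y i) Num.sqrt (p x i * p y i).

(* v is >= max_{x,y in S, f x <> f y} 1/overlap p x y  (with 1/0 = +infinity). *)
Definition PI_bound {R : realType} n (S : {set bv n}) (f : bv n -> bool)
  (p : bv n -> 'I_n -> R) (v : R) : Prop :=
  forall x y, x \in S -> y \in S -> f x != f y -> 1 <= v * overlap p x y.

(* sumPI(f) = min_p max_{x,y} 1/overlap = inf of the values v that bound the
   inner max for some family p. *)
Definition sumPI {R : realType} n (S : {set bv n}) (f : bv n -> bool) : R :=
  inf [set v : R | exists p, distr_family S p /\ PI_bound S f p v].

(* Every formula F with L leaves admits distributions p with
   sqrt L * sum_(i : x_i <> y_i) sqrt (p_x(i) p_y(i)) >= 1 whenever F separates x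
   and y: at an AND (OR) gate, on inputs where both children output 1 (0), mix the
   children's distributions with weights proportional to their sizes. For an
   eps-approximation by formulas of size at most s, the alpha-mixture of these
   distributions witnesses sumPI(f) <= sqrt s / (1 - 2 eps): by Cauchy-Schwarz the
   overlap of a mixture dominates the mixture of overlaps, and a pair x, y with
   f x <> f y is separated by members of total weight at least 1 - 2 eps. *)
From HB Require Import structures.
From mathcomp Require Import all_boot all_order all_algebra.
From mathcomp Require Import boolp classical_sets reals.
From mathcomp Require Import ring lra.
Set Implicit Arguments. Unset Strict Implicit. Unset Printing Implicit Defensive.
Import Order.TTheory GRing.Theory Num.Theory.
Local Open Scope ring_scope.

Section CauchySchwarz.
Variable R : realType.

Lemma sqrtM_add_le (u v w z : R) : 0 <= u -> 0 <= v -> 0 <= w -> 0 <= z ->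
  Num.sqrt (u * w) + Num.sqrt (v * z) <= Num.sqrt ((u + v) * (w + z)).
Proof.
move=> u0 v0 w0 z0.
rewrite -[u](sqr_sqrtr u0) -[v](sqr_sqrtr v0) -[w](sqr_sqrtr w0) -[z](sqr_sqrtr z0).
move: (sqrtr_ge0 u) (sqrtr_ge0 v) (sqrtr_ge0 w) (sqrtr_ge0 z).
move: (Num.sqrt u) (Num.sqrt v) (Num.sqrt w) (Num.sqrt z) => a b c d a0 b0 c0 d0.
rewrite -!exprMn !sqrtr_sqr !ger0_norm ?mulr_ge0 //.
have lhs0 : 0 <= a * c + b * d by rewrite addr_ge0 ?mulr_ge0.
rewrite -[leLHS](ger0_norm lhs0) -sqrtr_sqr ler_wsqrtr // -subr_ge0.
have -> : (a ^+ 2 + b ^+ 2) * (c ^+ 2 + d ^+ 2) - (a * c + b * d) ^+ 2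
   = (a * d - b * c) ^+ 2 by ring.
exact: sqr_ge0.
Qed.

Lemma sum_sqrtM_le (J : Type) (r : seq J) (a b : J -> R) :
  (forall j, 0 <= a j) -> (forall j, 0 <= b j) ->
  \sum_(j <- r) Num.sqrt (a j * b j) <=
  Num.sqrt ((\sum_(j <- r) a j) * (\sum_(j <- r) b j)).
Proof.
move=> a0 b0; elim: r => [|j r IHr]; first by rewrite !big_nil mul0r sqrtr0.
have A0 : 0 <= \sum_(k <- r) a k by exact: sumr_ge0.
have B0 : 0 <= \sum_(k <- r) b k by exact: sumr_ge0.
rewrite !big_cons; apply: le_trans (sqrtM_add_le (a0 j) A0 (b0 j) B0).
by rewrite lerD2l.
Qed.

End CauchySchwarz.

Section FormulaBound.
Variables (R : realType) (n : nat).
Implicit Types (p q : bv n -> 'I_n -> R) (g h k : bv n -> bool) (x y : bv n).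

Definition distr_familyT p := (forall x i, 0 <= p x i) /\ (forall x, \sum_i p x i = 1).

Definition PI_boundT g p (c : R) := forall x y, g x != g y -> 1 <= c * overlap p x y.

Lemma overlap_sym p x y : overlap p x y = overlap p y x.
Proof. by apply: eq_big => [i|i _]; rewrite 1?eq_sym // mulrC. Qed.

Lemma overlap_ge0 p x y : 0 <= overlap p x y.
Proof. by apply: sumr_ge0 => i _; exact: sqrtr_ge0. Qed.

Lemma ler_overlap (c : R) p q x y : 0 <= c ->
  (forall i, c * (q x i * q y i) <= p x i * p y i) ->
  Num.sqrt c * overlap q x y <= overlap p x y.
Proof.
move=> c0 le_pq; rewrite /overlap mulr_sumr; apply: ler_sum => i _.
by rewrite -sqrtrM // ler_wsqrtr.
Qed.

Lemma overlap_mix_bound (a c : R) p q x y : 0 < c -> 0 <= a ->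
  (forall i, 0 <= q y i) -> (forall i, a / c * q x i <= p x i) -> p y = q y ->
  1 <= Num.sqrt a * overlap q x y -> 1 <= Num.sqrt c * overlap p x y.
Proof.
move=> c0 a0 qy0 le_qp pqy /le_trans; apply.
have -> : a = c * (a / c) by rewrite mulrCA divff ?mulr1 // gt_eqF.
rewrite sqrtrM ?(ltW c0) // -mulrA ler_wpM2l ?sqrtr_ge0 //.
apply: ler_overlap => [|i]; first exact: divr_ge0 a0 (ltW c0).
by rewrite pqy mulrA ler_wpM2r.
Qed.

(* Where the gate outputs its controlling value [m], both children do, and their
   families are mixed; elsewhere some child already outputs [~~ m] and its family
   is used. *)
Definition gate_distr (m : bool) k g (la lb : R) p q x :=
  if k x == m then fun i => la * p x i + lb * q x i
  else if g x != m then p x else q x.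

Lemma gate_distrT (m : bool) k g (la lb : R) p q :
  0 <= la -> 0 <= lb -> la + lb = 1 -> distr_familyT p -> distr_familyT q ->
  distr_familyT (gate_distr m k g la lb p q).
Proof.
move=> la0 lb0 lab [p0 p1] [q0 q1]; rewrite /gate_distr; split=> x.
  by case: ifP => _; [move=> i; rewrite addr_ge0 ?mulr_ge0 | case: ifP].
case: ifP => _; last by case: ifP.
by rewrite big_split /= -!mulr_sumr p1 q1 !mulr1.
Qed.

Lemma PI_boundT_gate (m : bool) k g h (a b : R) p q :
  (forall x, (k x == m) = (g x == m) && (h x == m)) -> 0 < a -> 0 < b ->
  distr_familyT p -> distr_familyT q ->
  PI_boundT g p (Num.sqrt a) -> PI_boundT h q (Num.sqrt b) ->
  exists r, distr_familyT r /\ PI_boundT k r (Num.sqrt (a + b)).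
Proof.
move=> kgh a0 b0 dp dq bp bq.
have ab0 : 0 < a + b by rewrite addr_gt0.
pose la := a / (a + b); pose lb := b / (a + b).
have la0 : 0 <= la := divr_ge0 (ltW a0) (ltW ab0).
have lb0 : 0 <= lb := divr_ge0 (ltW b0) (ltW ab0).
have lab : la + lb = 1 by rewrite -mulrDl divff ?gt_eqF.
pose r := gate_distr m k g la lb p q.
have one_side x y : k x == m -> k y != m -> 1 <= Num.sqrt (a + b) * overlap r x y.
  move=> kx ky; have := kx; rewrite kgh => /andP[/eqP gx /eqP hx].
  have rx : r x = fun i => la * p x i + lb * q x i by rewrite /r /gate_distr kx.
  have [gy | /negPn gy] := boolP (g y != m).
    apply: (overlap_mix_bound (q := p) _ (ltW a0)) => //; first exact: dp.1.
    - by move=> i; rewrite rx lerDl mulr_ge0 //; exact: dq.1.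
    - by rewrite /r /gate_distr (negbTE ky) gy.
    - by apply: bp; rewrite gx eq_sym.
  have hy : h y != m by move: ky; rewrite kgh gy.
  rewrite addrC; apply: (overlap_mix_bound (q := q) _ (ltW b0)); rewrite 1?addrC //.
  - exact: dq.1.
  - by move=> i; rewrite rx lerDr mulr_ge0 //; exact: dp.1.
  - by rewrite /r /gate_distr (negbTE ky) gy.
  - by apply: bq; rewrite hx eq_sym.
exists r; split; first exact: gate_distrT.
move=> x y kxy; have [kx | kx] := boolP (k x == m).
  by apply: one_side => //; move: kxy; rewrite (eqP kx) eq_sym.
rewrite overlap_sym; apply: one_side => //.
by move: kxy kx; case: (k x); case: (k y); case: (m).
Qed.

Lemma leaves_gt0 (F : formula n) : (0 < leaves F)%N.
Proof. by elim: F => //= F1 IH1 F2 IH2; rewrite addn_gt0 IH1. Qed.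

Lemma PI_boundT_formula (F : formula n) :
  exists p, distr_familyT p /\ PI_boundT (feval F) p (Num.sqrt (leaves F)%:R).
Proof.
elim: F => [i b | G [p [dp bp]] H [q [dq bq]] | G [p [dp bp]] H [q [dq bq]]] /=.
- exists (fun _ j => (j == i)%:R); split.
    split=> [x j|x]; first by rewrite ler0n.
    by rewrite (bigD1 i) //= eqxx big1 ?addr0 // => j /negbTE ->.
  move=> x y xy; rewrite sqrtr1 mul1r /overlap (bigD1 i) /=; last first.
    by move: xy; case: b; case: (x i); case: (y i).
  by rewrite eqxx mulr1 sqrtr1 lerDl sumr_ge0 // => j _; exact: sqrtr_ge0.
- rewrite natrD; apply: (PI_boundT_gate (m := true) _ _ _ dp dq bp bq);
    rewrite ?ltr0n ?leaves_gt0 // => x /=.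
  by case: (feval G x); case: (feval H x).
- rewrite natrD; apply: (PI_boundT_gate (m := false) _ _ _ dp dq bp bq);
    rewrite ?ltr0n ?leaves_gt0 // => x /=.
  by case: (feval G x); case: (feval H x).
Qed.

End FormulaBound.

Section Approximation.
Variables (R : realType) (n : nat) (S : {set bv n}).
Implicit Types (p : bv n -> 'I_n -> R) (f g : bv n -> bool) (x y : bv n).

Lemma distr_familyT_restrict p : distr_familyT p -> distr_family S p.
Proof. by move=> [p0 p1] x _; split. Qed.

Lemma PI_bound_formula g (F : formula n) (s : nat) :
  agrees_on S F g -> (leaves F <= s)%N ->
  exists p, distr_familyT p /\ PI_bound S g p (Num.sqrt s%:R).
Proof.
move=> agF Fs; have [p [dp bp]] := PI_boundT_formula R F.
exists p; split=> // x y xS yS; rewrite -(agF x xS) -(agF y yS) => /bp /le_trans.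
by apply; rewrite ler_wpM2r ?overlap_ge0 // ler_wsqrtr // ler_nat.
Qed.

Definition mixture (J : finType) (alpha : J -> R) (P : J -> bv n -> 'I_n -> R) x i :=
  \sum_j alpha j * P j x i.

Lemma mixture_distrT (J : finType) (alpha : J -> R) P :
  (forall j, 0 <= alpha j) -> \sum_j alpha j = 1 -> (forall j, distr_familyT (P j)) ->
  distr_familyT (mixture alpha P).
Proof.
move=> al0 al1 dP; split=> [x i|x].
  by apply: sumr_ge0 => j _; rewrite mulr_ge0 //; exact: (dP j).1.
rewrite /mixture exchange_big /= -al1; apply: eq_bigr => j _.
by rewrite -mulr_sumr (dP j).2 mulr1.
Qed.

Lemma overlap_mixture_ge (J : finType) (alpha : J -> R) P x y :
  (forall j, 0 <= alpha j) -> (forall j x i, 0 <= P j x i) ->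
  \sum_j alpha j * overlap (P j) x y <= overlap (mixture alpha P) x y.
Proof.
move=> al0 P0; rewrite /overlap; under eq_bigr do rewrite mulr_sumr.
rewrite exchange_big /=; apply: ler_sum => i _.
apply: le_trans (sum_sqrtM_le _ _ _); last 2 first.
- by move=> j; rewrite mulr_ge0.
- by move=> j; rewrite mulr_ge0.
apply: ler_sum => j _.
by rewrite mulrACA -expr2 [leRHS]sqrtrM ?sqr_ge0 // sqrtr_sqr ger0_norm.
Qed.

Lemma agree_indicator_le (u v a b : bool) :
  u != v -> (u == a)%:R + (v == b)%:R - 1 <= (a != b)%:R :> R.
Proof. by case: u; case: v; case: a; case: b => //= _; lra. Qed.

Lemma approx_separation_weight f (eps : R) (J : finType) (fam : J -> bv n -> bool)
    (alpha : J -> R) x y :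
  (forall j, 0 <= alpha j) -> \sum_j alpha j = 1 ->
  (forall x, x \in S -> 1 - eps <= \sum_(j | f x == fam j x) alpha j) ->
  x \in S -> y \in S -> f x != f y ->
  1 - 2 * eps <= \sum_j alpha j * (fam j x != fam j y)%:R.
Proof.
move=> al0 al1 alS xS yS fxy.
have weights_sum : \sum_(j | f x == fam j x) alpha j + \sum_(j | f y == fam j y) alpha j - 1
    = \sum_j alpha j * ((f x == fam j x)%:R + (f y == fam j y)%:R - 1).
  rewrite -[in LHS]al1 !(big_mkcond (fun j => _ == _)) -big_split -sumrB /=.
  by apply: eq_bigr => j _; case: (_ == fam j x); case: (_ == fam j y) => /=; ring.
apply: (@le_trans _ _ (\sum_j alpha j * ((f x == fam j x)%:R + (f y == fam j y)%:R - 1))).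
  by rewrite -weights_sum; have := alS x xS; have := alS y yS; lra.
by apply: ler_sum => j _; rewrite ler_wpM2l // agree_indicator_le.
Qed.

Lemma approx_PI_bound f (eps : R) (s : nat) :
  eps < 1 / 2 -> approx_by_size S f eps s ->
  exists p, distr_family S p /\ PI_bound S f p (Num.sqrt s%:R / (1 - 2 * eps)).
Proof.
move=> eps_lt [J [fam [[alpha [al0 [al1 alS]]] sizes]]].
have fam_bound j : exists p, distr_familyT p /\ PI_bound S (fam j) p (Num.sqrt s%:R).
  by have [t [[[F [agF <-]] _] ts]] := sizes j; exact: PI_bound_formula agF ts.
have [P hP] := choice fam_bound.
have P0 j : forall x i, 0 <= P j x i by exact: (hP j).1.1.
exists (mixture alpha P); split.
  by apply/distr_familyT_restrict/mixture_distrT => // j; exact: (hP j).1.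
move=> x y xS yS fxy.
have c0 : 0 < 1 - 2 * eps by lra.
rewrite mulrAC ler_pdivlMr // mul1r.
apply: le_trans (approx_separation_weight al0 al1 alS xS yS fxy) _.
apply: le_trans (ler_wpM2l (sqrtr_ge0 _) (overlap_mixture_ge x y al0 P0)).
rewrite mulr_sumr; apply: ler_sum => j _; rewrite mulrCA ler_wpM2l //.
have [sep | _] := boolP (fam j x != fam j y); first exact: (hP j).2 x y xS yS sep.
by rewrite mulr_ge0 ?sqrtr_ge0 ?overlap_ge0.
Qed.

End Approximation.

Section SumPI.
Variables (R : realType) (n : nat) (S : {set bv n}) (f : bv n -> bool).
Local Open Scope classical_set_scope.

Local Notation PI_values :=
  [set v : R | exists p : bv n -> 'I_n -> R, distr_family S p /\ PI_bound S f p v].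

(* The defining set is then empty or all of [R], and [inf] returns its junk value 0. *)
Lemma sumPI_nonseparating :
  ~ (exists x y, [/\ x \in S, y \in S & f x != f y]) -> sumPI S f = 0 :> R.
Proof.
move=> nosep; rewrite /sumPI inf_out // => -[[v [p [dp _]]] [l lbl]].
have : PI_values (l - 1).
  by exists p; split=> // x y xS yS fxy; case: nosep; exists x, y.
by move=> /lbl; lra.
Qed.

Lemma PI_values_lbound0 x y : x \in S -> y \in S -> f x != f y -> lbound PI_values 0.
Proof. by move=> xS yS fxy v [p [_ /(_ x y xS yS fxy)]]; have := overlap_ge0 p x y; nra. Qed.

Lemma sumPI_ge0 : (0 : R) <= sumPI S f.
Proof.
have [[x [y [xS yS fxy]]] | nosep] :=
  pselect (exists x y, [/\ x \in S, y \in S & f x != f y]); last first.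
  by rewrite sumPI_nonseparating.
have [ne | empty] := pselect (PI_values !=set0).
  exact: lb_le_inf ne (PI_values_lbound0 xS yS fxy).
by rewrite /sumPI inf_out // => -[].
Qed.

Lemma sumPI_le (v : R) p :
  distr_family S p -> PI_bound S f p v -> 0 <= v -> sumPI S f <= v.
Proof.
move=> dp bp v0; have [[x [y [xS yS fxy]]] | nosep] :=
  pselect (exists x y, [/\ x \in S, y \in S & f x != f y]); last first.
  by rewrite sumPI_nonseparating.
by apply: ge_inf; [exists 0; exact: PI_values_lbound0 xS yS fxy | exists p].
Qed.

End SumPI.

Theorem mainTheorem2 (R : realType) (n : nat) (S : {set bv n})
  (f : bv n -> bool) (eps : R) :
  eps < 1 / 2 ->
  forall s : nat, isLeps S f eps s ->
  ((1 - 2 * eps) * sumPI S f) ^+ 2 <= s%:R.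
Proof.
move=> eps_lt s [approx _].
have [p [dp bp]] := approx_PI_bound eps_lt approx.
have c0 : 0 < 1 - 2 * eps by lra.
have sumPI_le_v := sumPI_le dp bp (divr_ge0 (sqrtr_ge0 _) (ltW c0)).
have lhs0 : 0 <= (1 - 2 * eps) * sumPI S f := mulr_ge0 (ltW c0) (sumPI_ge0 R S f).
rewrite -(sqr_sqrtr (ler0n R s)) ler_sqr ?nnegrE ?sqrtr_ge0 //.
by rewrite mulrC -ler_pdivlMr.
Qed.
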